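(* Let $\sigma$ be an anti-involution of $\mathcal D_{as}$, i.e. a $\mathbb C$-linear map with $\sigma^2=\mathrm{id}$ and $\sigma(XY)=\sigma(Y)\sigma(X)$ for all $X,Y$. Suppose $\sigma$ preserves the principal $\mathbb Z$-gradation. Then there is $b\in\mathbb C$ such that $\sigma$ is one of the following: (1) $\sigma_{-,b}$, defined by $\sigma_{-,b}(t)=-t$, $\sigma_{-,b}(D)=-D+b$; (2) $\sigma_{+,b}$, defined by $\sigma_{+,b}(t)=t$, $\sigma_{+,b}(D)=-D+b$.
   Context: $\mathcal D_{as}$ is the associative algebra of differential operators on the circle: it has basis $t^k D^l$ ($k\in\mathbb Z$, $l\in\mathbb Z_{\ge0}$), where $D=t\,\frac{d}{dt}$, with the relation $f(D)\,t^s=t^s f(D+s)$ for polynomials $f$. The principal $\mathbb Z$-gradation assigns degree $k$ to $t^k f(D)$. *)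

From HB Require Import structures.
From mathcomp Require Import all_boot all_order all_algebra.
From mathcomp Require Import reals.
From mathcomp.real_closed Require Import complex.
From mathcomp Require Import finmap.
From mathcomp.multinomials Require Import monalg.

Set Implicit Arguments.
Unset Strict Implicit.
Unset Printing Implicit Defensive.

Import Order.TTheory GRing.Theory Num.Theory.
Local Open Scope ring_scope.

Section DiffOps.
Variable R : realType.
Local Notation C := (R[i]).

(* The algebra D_as of differential operators on the circle, realised as
   finitely supported functions  int -> {poly C}:  the element f stands for
   sum_k t^k (f@_k)(D).  So t^k D^l is  << 'X^l *g k >>. *)
Definition DAs := {malg {poly C}[int]}.

Definition dshift (p : {poly C}) (m : int) : {poly C} :=
  p \Po ('X + (m%:~R)%:P).

(* Product, from  f(D) t^m = t^m f(D+m):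
   (t^k f(D)) (t^m g(D)) = t^(k+m) f(D+m) g(D). *)
Definition das_mul (f g : DAs) : DAs :=
  \sum_(k <- msupp f) \sum_(m <- msupp g)
     << (dshift f@_k m * g@_m) *g (k + m) >>.

Definition das_scale (c : C) (f : DAs) : DAs := c%:P *: f.

Definition das_one : DAs := << 1 *g 0 >>.
Definition das_t : DAs := << 1 *g 1 >>.
Definition das_tinv : DAs := << 1 *g (-1) >>.
Definition das_D : DAs := << 'X *g 0 >>.

Definition das_homog (k : int) (f : DAs) : Prop :=
  forall m : int, m != k -> f@_m = 0.

Definition das_anti_involution (sigma : DAs -> DAs) : Prop :=
  [/\ forall x y, sigma (x + y) = sigma x + sigma y,
      forall (c : C) x, sigma (das_scale c x) = das_scale c (sigma x),
      forall x, sigma (sigma x) = x &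
      forall x y, sigma (das_mul x y) = das_mul (sigma y) (sigma x)].

Definition das_preserves_grading (sigma : DAs -> DAs) : Prop :=
  forall (k : int) (x : DAs), das_homog k x -> das_homog k (sigma x).

End DiffOps.

From HB Require Import structures.
From mathcomp Require Import all_boot all_order all_algebra.
From mathcomp Require Import reals.
From mathcomp.real_closed Require Import complex.
From mathcomp Require Import finmap.
From mathcomp.multinomials Require Import monalg.
Set Implicit Arguments.
Unset Strict Implicit.
Unset Printing Implicit Defensive.

Import Order.TTheory GRing.Theory Num.Theory.
Local Open Scope ring_scope.

(* Grading preservation makes sigma map each monomial t^k p(D) to some
   t^k p'(D).  The relation t t^-1 = 1 forces sigma t = c t with c a unit
   polynomial, i.e. a nonzero constant, and sigma^2 = id gives c^2 = 1.
   Writing sigma D = q(D), the relation D t - t D = t turns into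
   q(D+1) = q(D) - 1, so q + D is invariant under D |-> D+1, hence a
   constant b: sigma D = -D + b. *)

Lemma shift_invariant_polyC (K : numFieldType) (p : {poly K}) :
  p \Po ('X + 1%:P) = p -> p = (p.[0])%:P.
Proof.
move=> hp.
have p_nat n : p.[n%:R] = p.[0].
  elim: n => [|n IH] //; rewrite -IH.
  by rewrite -{2}hp horner_comp !hornerE -natr1.
apply/eqP; rewrite -subr_eq0; apply/negPn/negP => q0.
set rs := [seq (n%:R : K) | n <- iota 0 (size (p - (p.[0])%:P))].
have rs_roots : all (root (p - (p.[0])%:P)) rs.
  by apply/allP => x /mapP [n _ ->]; rewrite /root !hornerE p_nat subrr.
have rs_uniq : uniq_roots rs.
  rewrite uniq_rootsE map_inj_uniq ?iota_uniq //.
  by move=> m n /eqP; rewrite eqr_nat => /eqP.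
have := max_ring_poly_roots q0 rs_roots rs_uniq.
by rewrite size_map size_iota ltnn.
Qed.

Section Monomials.
Variable R : realType.
Local Notation C := (R[i]).
Local Notation DAs := (DAs R).

Lemma dshiftC (c : C) m : @dshift R c%:P m = c%:P.
Proof. by rewrite /dshift comp_polyC. Qed.

Lemma dshift0 (p : {poly C}) : @dshift R p 0 = p.
Proof. by rewrite /dshift addr0 comp_polyXr. Qed.

Lemma das_mulUU (a b : {poly C}) (k m : int) :
  das_mul << a *g k >> << b *g m >> = << dshift a m * b *g (k + m) >> :> DAs.
Proof.
rewrite /das_mul !msuppU.
have [->|a0] := eqVneq a 0.
  by rewrite big_seq_fset0 /dshift comp_poly0 mul0r monalgU0.
have [->|b0] := eqVneq b 0.
  by rewrite big_seq_fset1 big_seq_fset0 mulr0 monalgU0.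
by rewrite !big_seq_fset1 !mcoeffUU.
Qed.

Lemma das_mulU1 (a : {poly C}) k :
  das_mul << a *g k >> (das_one R) = << a *g k >>.
Proof. by rewrite /das_one das_mulUU dshift0 mulr1 addr0. Qed.

Lemma das_scaleU (c : C) (a : {poly C}) k :
  das_scale c << a *g k >> = << c%:P * a *g k >> :> DAs.
Proof.
apply/malgP => j; rewrite mcoeffZ !mcoeffU.
by case: (k == j); rewrite ?mulr1n ?mulr0n ?mulr0.
Qed.

Lemma das_scale1 (f : DAs) : das_scale 1 f = f.
Proof. by rewrite /das_scale polyC1 scale1r. Qed.

Lemma das_scaleN1 (f : DAs) : das_scale (-1) f = - f.
Proof. by rewrite /das_scale polyCN polyC1 scaleN1r. Qed.

Lemma das_homogU k (a : {poly C}) : das_homog k (<< a *g k >> : DAs).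
Proof. by move=> m mk; rewrite mcoeffU eq_sym (negbTE mk). Qed.

Lemma das_homogE k (f : DAs) : das_homog k f -> f = << f@_k *g k >>.
Proof.
move=> hf; apply/malgP => j; rewrite mcoeffU.
have [->|kj] := eqVneq k j; first by rewrite mulr1n.
by rewrite mulr0n hf // eq_sym.
Qed.

Lemma das_mul_Dt :
  das_mul (das_D R) (das_t R) = das_mul (das_t R) (das_D R) + das_t R.
Proof.
rewrite /das_D /das_t !das_mulUU dshift0 /dshift comp_polyX.
by rewrite addr0 add0r mulr1 mul1r -monalgUD.
Qed.

Lemma das_mul_tinvt : das_mul (das_tinv R) (das_t R) = das_one R.
Proof. by rewrite /das_tinv /das_t das_mulUU dshiftC mulr1 addNr. Qed.

Lemma das_mul_ttinv : das_mul (das_t R) (das_tinv R) = das_one R.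
Proof. by rewrite /das_tinv /das_t das_mulUU dshiftC mulr1 addrN. Qed.

End Monomials.

Section AntiInvolution.
Variable R : realType.
Local Notation C := (R[i]).
Local Notation DAs := (DAs R).
Local Notation t := (das_t R).
Local Notation tinv := (das_tinv R).
Local Notation D := (das_D R).
Local Notation one := (das_one R).

Variable sigma : DAs -> DAs.
Hypothesis sigma_anti : das_anti_involution sigma.
Hypothesis sigma_graded : das_preserves_grading sigma.

Let sigma_add : {morph sigma : x y / x + y}.
Proof. by case: sigma_anti. Qed.

Let sigma_scale c x : sigma (das_scale c x) = das_scale c (sigma x).
Proof. by case: sigma_anti. Qed.

Let sigma_invol : involutive sigma.
Proof. by case: sigma_anti. Qed.

Let sigma_mul x y : sigma (das_mul x y) = das_mul (sigma y) (sigma x).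
Proof. by case: sigma_anti. Qed.

Lemma sigma_monomial (a : {poly C}) k :
  sigma << a *g k >> = << (sigma << a *g k >>)@_k *g k >>.
Proof. by apply: das_homogE; apply: sigma_graded; apply: das_homogU. Qed.

Lemma sigma_one : sigma one = one.
Proof.
have one_r : das_mul (sigma one) one = sigma one.
  by rewrite sigma_monomial das_mulU1.
transitivity (das_mul (sigma one) (sigma (sigma one))).
  by rewrite sigma_invol one_r.
by rewrite -sigma_mul one_r sigma_invol.
Qed.

Lemma sigma_t_tinv : exists c : C,
  [/\ c ^+ 2 = 1, sigma t = das_scale c t & sigma tinv = das_scale c^-1 tinv].
Proof.
move: (sigma_monomial 1 1) (sigma_monomial 1 (-1)); rewrite -/t -/tinv.
move: (sigma t)@_1 (sigma tinv)@_(-1) => p r st stinv.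
have rp : dshift r 1 * p = 1.
  have := congr1 sigma (das_mul_ttinv R).
  rewrite sigma_mul sigma_one st stinv das_mulUU addNr.
  by move/(congr1 (mcoeff 0)); rewrite !mcoeffUU.
have pr : dshift p (-1) * r = 1.
  have := congr1 sigma (das_mul_tinvt R).
  rewrite sigma_mul sigma_one st stinv das_mulUU addrN.
  by move/(congr1 (mcoeff 0)); rewrite !mcoeffUU.
have : p \is a GRing.unit by apply/unitrPr; exists (dshift r 1); rewrite mulrC.
rewrite poly_unitE => /andP [/size_poly1P [c c0 pc] _].
rewrite pc dshiftC in pr.
have rc : r = (c^-1)%:P.
  by rewrite -[r]mul1r -polyC1 -(mulVf c0) polyCM -mulrA pr mulr1.
have {}st : sigma t = das_scale c t by rewrite st pc /t das_scaleU mulr1.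
exists c; split=> //; last by rewrite stinv rc /tinv das_scaleU mulr1.
have : t = das_scale c (das_scale c t) by rewrite -{1}(sigma_invol t) st sigma_scale st.
move/(congr1 (mcoeff 1)); rewrite !das_scaleU !mcoeffUU mulr1 -polyCM.
by move/polyC_inj; rewrite expr2.
Qed.

Lemma sigma_D : exists b : C, sigma D = - D + das_scale b one.
Proof.
have [c [cc st _]] := sigma_t_tinv.
have c0 : c != 0.
  by apply/eqP => c0; move: cc; rewrite c0 expr0n => /eqP; rewrite eq_sym oner_eq0.
move: (sigma_monomial 'X 0); rewrite -/D; move: (sigma D)@_0 => q sD.
have qc : c%:P * q = dshift q 1 * c%:P + c%:P.
  have := congr1 sigma (das_mul_Dt R).
  rewrite sigma_add !sigma_mul st /t das_scaleU mulr1 sD !das_mulUU dshift0 add0r addr0.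
  by move/(congr1 (mcoeff 1)); rewrite mcoeffD !mcoeffUU.
have q_shift : dshift q 1 = q - 1.
  apply: (@mulfI _ c%:P); first by rewrite polyC_eq0.
  by rewrite mulrBr mulr1 qc addrK mulrC.
exists ((q + 'X).[0]).
have q_const : q + 'X = ((q + 'X).[0])%:P.
  apply: shift_invariant_polyC.
  rewrite comp_polyD comp_polyX -[q \Po _]/(dshift q 1) q_shift.
  by rewrite addrCA subrK addrC.
by rewrite sD /D /one das_scaleU mulr1 -q_const -monalgUN -monalgUD addrC addrK.
Qed.

End AntiInvolution.

Theorem mainTheorem1 (R : realType) (sigma : DAs R -> DAs R) :
  das_anti_involution sigma -> das_preserves_grading sigma ->
  exists b : R[i],
    (* sigma = sigma_{-,b} *)
    (sigma (das_t R) = - das_t R /\ sigma (das_tinv R) = - das_tinv R /\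
     sigma (das_D R) = - das_D R + das_scale b (das_one R))
    \/
    (* sigma = sigma_{+,b} *)
    (sigma (das_t R) = das_t R /\ sigma (das_tinv R) = das_tinv R /\
     sigma (das_D R) = - das_D R + das_scale b (das_one R)).
Proof.
move=> anti graded.
have [b sD] := sigma_D anti graded.
have [c [cc st stinv]] := sigma_t_tinv anti graded.
exists b; rewrite st stinv sD.
have /eqP := cc; rewrite sqrf_eq1 => /orP [/eqP ->|/eqP ->].
  by right; rewrite invr1 !das_scale1.
by left; rewrite invrN1 !das_scaleN1.
Qed.
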